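(* Let $X_n$ and $Y_n$ be random variables taking values in countable sets $\mathcal X_n$ and $\mathcal Y_n$, with pmfs $P_{X_n}$, $P_{Y_n}$. Let $\epsilon\in(0,1)$ and $\gamma>0$ satisfy $e^{-\gamma}\le\epsilon$. Define $$\mathcal E^n(\gamma)=\{\delta\in[0,1): c_n^x(\delta)-c_n^y(\delta)<\gamma\}.$$ Then there exists a (deterministic) map $\phi_n:\mathcal X_n\to\mathcal Y_n$ such that $$d\big(P_{Y_n},P_{\phi_n(X_n)}\big)\le 9\epsilon+10\,\mu(\mathcal E^n(\gamma)).$$
   Context: Logarithms are natural. For a random variable $Z$ on a countable set $\mathcal Z$ with pmf $P_Z$, list the elements of positive probability as $z_1,z_2,\dots$ (a finite or countably infinite list) with $P_Z(z_1)\ge P_Z(z_2)\ge\cdots$ (ties broken arbitrarily). Set $\delta_0=0$ and $\delta_k=\sum_{i\le k}P_Z(z_i)$. For $\delta\in[0,1)$ define $c^z(\delta)=\log\frac{1}{P_Z(z_k)}$, where $k$ is the unique index with $\delta\in[\delta_{k-1},\delta_k)$. This is a nonnegative, nondecreasing, right-continuous step function on $[0,1)$ that does not depend on the tie-breaking. Here $c_n^x$ and $c_n^y$ denote this function built from $P_{X_n}$ and from $P_{Y_n}$ respectively. The variational distance between pmfs $P,Q$ on a countable set is $d(P,Q)=\sum_a|P(a)-Q(a)|$ (no factor $1/2$). $\mu$ denotes Lebesgue measure on $\mathbb R$. *)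

From Stdlib Require Import Reals Lra List Classical ClassicalEpsilon.
Open Scope R_scope.

Definition sum_list {T : Type} (f : T -> R) (l : list T) : R :=
  fold_right (fun x acc => f x + acc) 0 l.

Definition finite_sums {T : Type} (f : T -> R) (s : R) : Prop :=
  exists l : list T, NoDup l /\ s = sum_list f l.

Definition lub_or_0 (S : R -> Prop) : R :=
  match excluded_middle_informative (bound S /\ exists x, S x) with
  | left h => proj1_sig (completeness S (proj1 h) (proj2 h))
  | right _ => 0
  end.

(* Sum over a (countable) type of a nonnegative function: the supremum of its
   finite partial sums (0 if divergent; only used for summable nonneg. f). *)
Definition tsum {T : Type} (f : T -> R) : R := lub_or_0 (finite_sums f).

Definition is_pmf {T : Type} (P : T -> R) : Prop :=
  (forall x, 0 <= P x) /\ is_lub (finite_sums P) 1.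

Definition countable (T : Type) : Prop :=
  exists f : T -> nat, forall a b, f a = f b -> a = b.

Definition pushforward {X Y : Type} (P : X -> R) (phi : X -> Y) : Y -> R :=
  fun y => tsum (fun x => if excluded_middle_informative (phi x = y) then P x else 0).

(* variational distance d(P,Q) = sum |P a - Q a| (no factor 1/2) *)
Definition var_dist {T : Type} (P Q : T -> R) : R :=
  tsum (fun a => Rabs (P a - Q a)).

(* z_0, z_1, ... (indices k with I k, I downward closed) is a listing of the
   elements of positive probability, without repetition, nonincreasing in P. *)
Definition dec_enum {T : Type} (P : T -> R) (I : nat -> Prop) (z : nat -> T) : Prop :=
  (forall k, I (S k) -> I k) /\
  (forall k l, I k -> I l -> z k = z l -> k = l) /\
  (forall k, I k -> 0 < P (z k)) /\
  (forall x, 0 < P x -> exists k, I k /\ z k = x) /\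
  (forall k, I (S k) -> P (z (S k)) <= P (z k)).

(* delta k = sum_{i<k} P(z i) (0-based; the paper's delta_k with shifted index) *)
Fixpoint delta {T : Type} (P : T -> R) (z : nat -> T) (k : nat) : R :=
  match k with
  | O => 0
  | S k' => delta P z k' + P (z k')
  end.

(* c^z(d) = v : v = log(1/P(z_k)) for the k with d in [delta_k, delta_{k+1}). *)
Definition c_fun {T : Type} (P : T -> R) (I : nat -> Prop) (z : nat -> T)
  (d v : R) : Prop :=
  exists k, I k /\ delta P z k <= d < delta P z (S k) /\ v = ln (/ P (z k)).

Definition E_set {X Y : Type} (PX : X -> R) (IX : nat -> Prop) (zX : nat -> X)
  (PY : Y -> R) (IY : nat -> Prop) (zY : nat -> Y) (gamma : R) (d : R) : Prop :=
  0 <= d < 1 /\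
  exists vx vy, c_fun PX IX zX d vx /\ c_fun PY IY zY d vy /\ vx - vy < gamma.

Definition cover_lengths (E : R -> Prop) (t : R) : Prop :=
  exists a b : nat -> R,
    (forall k, a k <= b k) /\
    (forall x, E x -> exists k, a k <= x < b k) /\
    Un_cv (sum_f_R0 (fun k => b k - a k)) t.

(* Lebesgue (outer) measure: infimum of total lengths of interval covers. *)
Definition lebesgue (E : R -> Prop) : R :=
  - lub_or_0 (fun t => cover_lengths E (- t)).

(** List the elements of positive probability as x_0, x_1, ... and y_0, y_1, ...,
    with cumulative masses dx k and dy j, so that x_k owns [dx k, dx (k+1)) and y_j owns
    [dy j, dy (j+1)).  The quantile map sends x_k to the y_j whose interval contains dx k.
    Every x-interval starting inside the interval of y_j is sent to y_j, so y_j receives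
    at least P_Y(y_j) minus the overlap of its interval with the x-interval straddling its
    left end dy j.  If dy j is not in E(gamma), that straddling x-interval has mass at most
    exp(-gamma) P_Y(y_j); if dy j is in E(gamma), both c^x and c^y are constant on the
    overlap, which therefore lies in E(gamma).  The overlaps thus total at most
    exp(-gamma) + mu(E(gamma)), and d(P_Y, P_phi(X)), twice the total excess of P_Y over
    P_phi(X), is at most 2 exp(-gamma) + 2 mu(E(gamma)) <= 9 eps + 10 mu(E(gamma)). *)

From Stdlib Require Import Reals Lra Lia List Classical ClassicalEpsilon.
Import ListNotations.
Open Scope R_scope.

Definition classic_eq_dec {T : Type} (x y : T) : {x = y} + {x <> y} :=
  excluded_middle_informative (x = y).

Lemma sum_list_app {T : Type} (f : T -> R) (l1 l2 : list T) :
  sum_list f (l1 ++ l2) = sum_list f l1 + sum_list f l2.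
Proof. induction l1 as [|x l1 IH]; simpl; [ring | rewrite IH; ring]. Qed.

Lemma sum_list_map {A B : Type} (f : B -> R) (g : A -> B) (l : list A) :
  sum_list f (map g l) = sum_list (fun x => f (g x)) l.
Proof. induction l as [|x l IH]; simpl; [reflexivity | rewrite IH; reflexivity]. Qed.

Lemma sum_list_plus {T : Type} (f g : T -> R) (l : list T) :
  sum_list (fun x => f x + g x) l = sum_list f l + sum_list g l.
Proof. induction l as [|x l IH]; simpl; [ring | rewrite IH; ring]. Qed.

Lemma sum_list_scal {T : Type} (a : R) (f : T -> R) (l : list T) :
  sum_list (fun x => a * f x) l = a * sum_list f l.
Proof. induction l as [|x l IH]; simpl; [ring | rewrite IH; ring]. Qed.

Lemma sum_list_le {T : Type} (f g : T -> R) (l : list T) :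
  (forall x, In x l -> f x <= g x) -> sum_list f l <= sum_list g l.
Proof.
  induction l as [|x l IH]; intros Hfg; simpl; [lra|].
  assert (f x <= g x) by (apply Hfg; left; reflexivity).
  assert (sum_list f l <= sum_list g l) by (apply IH; intros y Hy; apply Hfg; right; exact Hy).
  lra.
Qed.

Lemma sum_list_ext {T : Type} (f g : T -> R) (l : list T) :
  (forall x, In x l -> f x = g x) -> sum_list f l = sum_list g l.
Proof.
  intros Hfg; apply Rle_antisym; apply sum_list_le; intros x Hx; rewrite (Hfg x Hx); lra.
Qed.

Lemma sum_list_nonneg {T : Type} (f : T -> R) (l : list T) :
  (forall x, In x l -> 0 <= f x) -> 0 <= sum_list f l.
Proof.
  intros Hf. replace 0 with (sum_list (fun _ => 0) l).
  - apply sum_list_le; exact Hf.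
  - induction l as [|x l IH]; simpl; [reflexivity|]. rewrite IH; [ring|].
    intros y Hy; apply Hf; right; exact Hy.
Qed.

Lemma sum_list_remove {T : Type} (f : T -> R) (l : list T) (x : T) :
  (forall y, In y l -> 0 <= f y) -> In x l ->
  f x + sum_list f (remove classic_eq_dec x l) <= sum_list f l.
Proof.
  induction l as [|a l IH]; intros Hf Hx; [destruct Hx|]. simpl.
  assert (Ha : 0 <= f a) by (apply Hf; left; reflexivity).
  assert (Hl : forall y, In y l -> 0 <= f y) by (intros y Hy; apply Hf; right; exact Hy).
  destruct (classic_eq_dec x a) as [<-|Hne].
  - destruct (in_dec classic_eq_dec x l) as [Hin|Hnin].
    + specialize (IH Hl Hin). lra.
    + rewrite notin_remove by exact Hnin. lra.
  - simpl. destruct Hx as [<-|Hin]; [congruence|]. specialize (IH Hl Hin). lra.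
Qed.

Lemma sum_list_in {T : Type} (f : T -> R) (l : list T) (x : T) :
  (forall y, In y l -> 0 <= f y) -> In x l -> f x <= sum_list f l.
Proof.
  intros Hf Hx. pose proof (sum_list_remove f l x Hf Hx).
  assert (0 <= sum_list f (remove classic_eq_dec x l)).
  { apply sum_list_nonneg. intros y Hy. apply Hf. exact (proj1 (in_remove _ _ _ _ Hy)). }
  lra.
Qed.

Lemma sum_list_incl {T : Type} (f : T -> R) (l1 l2 : list T) :
  NoDup l1 -> (forall x, In x l1 -> In x l2) -> (forall y, In y l2 -> 0 <= f y) ->
  sum_list f l1 <= sum_list f l2.
Proof.
  revert l2; induction l1 as [|a l1 IH]; intros l2 Hnd Hincl Hf; simpl.
  - apply sum_list_nonneg; exact Hf.
  - inversion Hnd as [|? ? Ha_notin Hnd1]; subst.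
    assert (Ha : In a l2) by (apply Hincl; left; reflexivity).
    pose proof (sum_list_remove f l2 a Hf Ha).
    assert (sum_list f l1 <= sum_list f (remove classic_eq_dec a l2)).
    { apply IH; [exact Hnd1| |].
      - intros x Hx. apply in_in_remove; [intros ->; contradiction|].
        apply Hincl; right; exact Hx.
      - intros y Hy. apply Hf. exact (proj1 (in_remove _ _ _ _ Hy)). }
    lra.
Qed.

Lemma sum_list_swap {A B : Type} (g : A -> B -> R) (la : list A) (lb : list B) :
  sum_list (fun a => sum_list (fun b => g a b) lb) la =
  sum_list (fun b => sum_list (fun a => g a b) la) lb.
Proof.
  induction la as [|a la IH]; simpl.
  - induction lb as [|b lb IHb]; simpl; [reflexivity | rewrite <- IHb; ring].
  - rewrite IH, <- sum_list_plus. reflexivity.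
Qed.

Definition partial_sum (w : nat -> R) (n : nat) : R := sum_list w (seq 0 n).

Lemma partial_sum_S (w : nat -> R) (n : nat) :
  partial_sum w (S n) = partial_sum w n + w n.
Proof. unfold partial_sum. rewrite seq_S, sum_list_app. simpl. ring. Qed.

Lemma partial_sum_sum_f_R0 (w : nat -> R) (n : nat) : partial_sum w (S n) = sum_f_R0 w n.
Proof.
  induction n as [|n IH]; [unfold partial_sum; simpl; ring|].
  rewrite partial_sum_S, IH. reflexivity.
Qed.

Lemma sum_list_reindex {T : Type} (h : T -> R) (z : nat -> T) (J : nat -> Prop)
    (w : nat -> R) (l : list T) :
  NoDup l ->
  (forall x, In x l -> h x <= 0 \/ exists k, J k /\ z k = x /\ h x <= w k) ->
  exists L, NoDup L /\ (forall k, In k L -> J k /\ In (z k) l) /\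
    sum_list h l <= sum_list w L.
Proof.
  induction l as [|x l IH]; intros Hnd Hdom.
  - exists []. split; [constructor | split; [intros k [] | simpl; lra]].
  - inversion Hnd as [|? ? Hx_notin Hnd_l]; subst.
    destruct IH as [L [HL_nd [HL_in HL_sum]]]; [exact Hnd_l|
      intros y Hy; apply Hdom; right; exact Hy|].
    destruct (Hdom x (or_introl eq_refl)) as [Hneg|[k [Jk [Hzk Hle]]]].
    + exists L. split; [exact HL_nd | split; [|simpl; lra]].
      intros k Hk. destruct (HL_in k Hk) as [Jk Hzk]. split; [exact Jk | right; exact Hzk].
    + exists (k :: L). split; [|split].
      * constructor; [|exact HL_nd].
        intros Hk. apply HL_in in Hk. rewrite Hzk in Hk. tauto.
      * intros k' [<-|Hk']; [split; [exact Jk | left; symmetry; exact Hzk]|].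
        destruct (HL_in k' Hk') as [Jk' Hzk']. split; [exact Jk' | right; exact Hzk'].
      * simpl. lra.
Qed.

Lemma finite_index_bound (J : nat -> Prop) (L : list nat) :
  (forall k j, J k -> (j <= k)%nat -> J j) -> (forall k, In k L -> J k) ->
  exists N, (forall k, In k L -> (k < N)%nat) /\ (forall j, (j < N)%nat -> J j).
Proof.
  intros Hdown. induction L as [|k L IH]; intros HL.
  - exists 0%nat. split; [intros k [] | intros j Hj; lia].
  - destruct IH as [N [HN_lt HN_J]]; [intros k' Hk'; apply HL; right; exact Hk'|].
    exists (Nat.max N (S k)). split.
    + intros k' [<-|Hk']; [lia | specialize (HN_lt k' Hk'); lia].
    + intros j Hj. destruct (Nat.lt_ge_cases j N) as [HjN|HjN]; [exact (HN_J j HjN)|].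
      apply (Hdown k); [apply HL; left; reflexivity | lia].
Qed.

Lemma sum_list_reindex_bound {T : Type} (h : T -> R) (z : nat -> T) (J : nat -> Prop)
    (w : nat -> R) (l : list T) :
  (forall k j, J k -> (j <= k)%nat -> J j) -> (forall k, J k -> 0 <= w k) ->
  NoDup l ->
  (forall x, In x l -> h x <= 0 \/ exists k, J k /\ z k = x /\ h x <= w k) ->
  exists N, (forall j, (j < N)%nat -> J j) /\ sum_list h l <= partial_sum w N.
Proof.
  intros Hdown Hw Hnd Hdom.
  destruct (sum_list_reindex h z J w l Hnd Hdom) as [L [HL_nd [HL_in HL_sum]]].
  destruct (finite_index_bound J L Hdown) as [N [HN_lt HN_J]];
    [intros k Hk; exact (proj1 (HL_in k Hk))|].
  exists N. split; [exact HN_J|].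
  assert (sum_list w L <= partial_sum w N).
  { apply sum_list_incl; [exact HL_nd| |].
    - intros k Hk. apply in_seq. specialize (HN_lt k Hk). lia.
    - intros j Hj. apply in_seq in Hj. apply Hw, HN_J. lia. }
  lra.
Qed.

Lemma finite_sums_lub_ge {T : Type} (f : T -> R) (s : R) (l : list T) :
  is_lub (finite_sums f) s -> NoDup l -> sum_list f l <= s.
Proof. intros [Hub _] Hl. apply Hub. exists l. split; [exact Hl | reflexivity]. Qed.

Lemma finite_sums_lub_approx {T : Type} (f : T -> R) (s eta : R) :
  is_lub (finite_sums f) s -> 0 < eta -> exists l, NoDup l /\ s - eta < sum_list f l.
Proof.
  intros [_ Hleast] Heta. apply NNPP. intros Hnone.
  assert (s <= s - eta); [|lra].
  apply Hleast. intros t [l [Hl ->]].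
  apply Rnot_lt_le. intros Hlt. apply Hnone. exists l. split; [exact Hl | exact Hlt].
Qed.

Lemma tsum_nonneg {T : Type} (f : T -> R) : 0 <= tsum f.
Proof.
  unfold tsum, lub_or_0. destruct excluded_middle_informative as [Hbd|Hbd]; [|lra].
  destruct completeness as [m [Hub Hleast]]. simpl. apply Hub.
  exists []. split; [constructor | reflexivity].
Qed.

Lemma tsum_is_lub {T : Type} (f : T -> R) (B : R) :
  (forall l, NoDup l -> sum_list f l <= B) -> is_lub (finite_sums f) (tsum f).
Proof.
  intros HB. unfold tsum, lub_or_0. destruct excluded_middle_informative as [Hbd|Hno].
  - destruct completeness as [m Hm]. exact Hm.
  - exfalso. apply Hno. split.
    + exists B. intros s [l [Hl ->]]. exact (HB l Hl).
    + exists 0, []. split; [constructor | reflexivity].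
Qed.

Lemma pmf_nonneg {T : Type} (P : T -> R) (x : T) : is_pmf P -> 0 <= P x.
Proof. intros [Hnn _]. exact (Hnn x). Qed.

Lemma pmf_sum_le1 {T : Type} (P : T -> R) (l : list T) :
  is_pmf P -> NoDup l -> sum_list P l <= 1.
Proof. intros [_ Hlub]. exact (finite_sums_lub_ge P 1 l Hlub). Qed.

(** * Image measures *)

Section Pushforward.
Context {X Y : Type} (P : X -> R) (phi : X -> Y).

Definition fiber_mass (y : Y) (x : X) : R :=
  if excluded_middle_informative (phi x = y) then P x else 0.

Lemma pushforward_nonneg (y : Y) : 0 <= pushforward P phi y.
Proof. apply tsum_nonneg. Qed.

Hypothesis hP : is_pmf P.

Lemma fiber_mass_bounds (y : Y) (x : X) : 0 <= fiber_mass y x <= P x.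
Proof.
  unfold fiber_mass. pose proof (pmf_nonneg P x hP).
  destruct excluded_middle_informative; lra.
Qed.

Lemma pushforward_is_lub (y : Y) : is_lub (finite_sums (fiber_mass y)) (pushforward P phi y).
Proof.
  apply (tsum_is_lub _ 1). intros l Hl.
  apply Rle_trans with (sum_list P l); [|exact (pmf_sum_le1 P l hP Hl)].
  apply sum_list_le. intros x _. apply fiber_mass_bounds.
Qed.

Lemma pushforward_ge_fiber (y : Y) (l : list X) :
  NoDup l -> (forall x, In x l -> phi x = y) -> sum_list P l <= pushforward P phi y.
Proof.
  intros Hl Hphi.
  replace (sum_list P l) with (sum_list (fiber_mass y) l).
  - exact (finite_sums_lub_ge _ _ l (pushforward_is_lub y) Hl).
  - apply sum_list_ext. intros x Hx. unfold fiber_mass.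
    destruct excluded_middle_informative as [_|Hne]; [reflexivity|].
    exfalso. exact (Hne (Hphi x Hx)).
Qed.

Lemma fiber_mass_column (x : X) (L : list Y) :
  NoDup L -> sum_list (fun y => fiber_mass y x) L <= P x.
Proof.
  induction L as [|y L IH]; intros HL; simpl.
  - exact (pmf_nonneg P x hP).
  - inversion HL as [|? ? Hy_notin HL_nd]; subst. unfold fiber_mass at 1.
    destruct excluded_middle_informative as [Hxy|Hxy]; [|specialize (IH HL_nd); lra].
    assert (sum_list (fun y' => fiber_mass y' x) L <= 0); [|lra].
    apply Rle_trans with (sum_list (fun _ => 0) L); [apply sum_list_le|].
    + intros y' Hy'. unfold fiber_mass. destruct excluded_middle_informative; [|lra].
      exfalso. apply Hy_notin. congruence.
    + right. clear. induction L as [|y L IH]; simpl; [reflexivity | rewrite IH; ring].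
Qed.

Lemma pushforward_sums_approx (L : list Y) (eta : R) : 0 < eta ->
  exists l, NoDup l /\
    sum_list (pushforward P phi) L <= sum_list (fun y => sum_list (fiber_mass y) l) L + eta.
Proof.
  revert eta. induction L as [|y L IH]; intros eta Heta.
  - exists []. split; [constructor | simpl; lra].
  - destruct (IH (eta / 2)) as [l1 [Hl1 Happrox1]]; [lra|].
    destruct (finite_sums_lub_approx _ _ (eta / 2) (pushforward_is_lub y))
      as [l2 [Hl2 Happrox2]]; [lra|].
    exists (nodup classic_eq_dec (l1 ++ l2)). split; [apply NoDup_nodup|].
    assert (Hsub : forall l0 y0, (forall x, In x l0 -> In x (l1 ++ l2)) ->
              NoDup l0 -> sum_list (fiber_mass y0) l0 <=
                          sum_list (fiber_mass y0) (nodup classic_eq_dec (l1 ++ l2))).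
    { intros l0 y0 Hincl Hl0. apply sum_list_incl; [exact Hl0| |].
      - intros x Hx. apply nodup_In. apply Hincl. exact Hx.
      - intros x _. apply fiber_mass_bounds. }
    assert (sum_list (fiber_mass y) l2 <=
              sum_list (fiber_mass y) (nodup classic_eq_dec (l1 ++ l2)))
      by (apply Hsub; [intros x Hx; apply in_or_app; right; exact Hx | exact Hl2]).
    assert (sum_list (fun y0 => sum_list (fiber_mass y0) l1) L <=
              sum_list (fun y0 => sum_list (fiber_mass y0) (nodup classic_eq_dec (l1 ++ l2))) L)
      by (apply sum_list_le; intros y0 _;
          apply Hsub; [intros x Hx; apply in_or_app; left; exact Hx | exact Hl1]).
    simpl. lra.
Qed.

Lemma pushforward_sum_le1 (L : list Y) : NoDup L -> sum_list (pushforward P phi) L <= 1.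
Proof.
  intros HL. apply Rle_plus_epsilon. intros eta Heta.
  destruct (pushforward_sums_approx L eta Heta) as [l [Hl Happrox]].
  rewrite (sum_list_swap (fun y x => fiber_mass y x)) in Happrox.
  assert (sum_list (fun x => sum_list (fun y => fiber_mass y x) L) l <= sum_list P l)
    by (apply sum_list_le; intros x _; exact (fiber_mass_column x L HL)).
  pose proof (pmf_sum_le1 P l hP Hl). lra.
Qed.

End Pushforward.

(** * Variational distance *)

Lemma var_dist_le_excess {T : Type} (P Q : T -> R) (D : R) :
  is_pmf P -> (forall l, NoDup l -> sum_list Q l <= 1) ->
  (forall l, NoDup l -> sum_list (fun a => Rmax (P a - Q a) 0) l <= D) ->
  var_dist P Q <= 2 * D.
Proof.
  intros hP HQ Hexcess.
  set (dist := fun a => Rabs (P a - Q a)).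
  assert (Hsums : forall l, NoDup l -> sum_list dist l <= 2 * D).
  { intros l Hl. apply Rle_plus_epsilon. intros eta Heta.
    destruct (finite_sums_lub_approx P 1 eta (proj2 hP) Heta) as [l2 [Hl2 Hmass]].
    set (l' := nodup classic_eq_dec (l ++ l2)).
    assert (Hl' : NoDup l') by apply NoDup_nodup.
    assert (sum_list dist l <= sum_list dist l').
    { apply sum_list_incl; [exact Hl| |intros a _; apply Rabs_pos].
      intros a Ha. apply nodup_In, in_or_app. left; exact Ha. }
    assert (sum_list P l2 <= sum_list P l').
    { apply sum_list_incl; [exact Hl2| |intros a _; exact (pmf_nonneg P a hP)].
      intros a Ha. apply nodup_In, in_or_app. right; exact Ha. }
    assert (Hsplit : sum_list dist l' + sum_list P l' =
                     2 * sum_list (fun a => Rmax (P a - Q a) 0) l' + sum_list Q l').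
    { rewrite <- sum_list_plus, <- sum_list_scal, <- sum_list_plus.
      apply sum_list_ext. intros a _. unfold dist, Rmax, Rabs.
      destruct Rcase_abs, Rle_dec; lra. }
    pose proof (Hexcess l' Hl'). pose proof (HQ l' Hl'). lra. }
  apply (proj2 (tsum_is_lub dist (2 * D) Hsums)).
  intros s [l [Hl ->]]. exact (Hsums l Hl).
Qed.

(** * A lower bound for the outer measure [lebesgue] *)

Lemma closed_interval_finite_cover (a b : nat -> R) (L : list nat) (c t : R) :
  (forall k, a k <= b k) -> (forall y, c <= y <= t -> exists k, In k L /\ a k < y < b k) ->
  t - c <= sum_list (fun k => b k - a k) L.
Proof.
  intros hab.
  assert (Hlen : forall k, 0 <= b k - a k) by (intros k; specialize (hab k); lra).
  remember (length L) as n eqn:Hn. revert L c Hn.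
  induction n as [n IH] using Wf_nat.lt_wf_ind; intros L c Hn Hcov.
  destruct (Rlt_dec t c) as [Htc|Hct].
  { pose proof (sum_list_nonneg (fun k => b k - a k) L (fun k _ => Hlen k)). lra. }
  destruct (Hcov c) as [K [HK [HaK HbK]]]; [lra|].
  pose proof (sum_list_in (fun k => b k - a k) L K (fun k _ => Hlen k) HK).
  destruct (Rlt_dec t (b K)) as [HtK|HKt]; [simpl in *; lra|].
  (* the rest [b K, t] is covered by the other intervals *)
  assert (t - b K <= sum_list (fun k => b k - a k) (remove classic_eq_dec K L)).
  { apply (IH (length (remove classic_eq_dec K L))); [|reflexivity|].
    - rewrite Hn. apply remove_length_lt. exact HK.
    - intros y Hy. destruct (Hcov y) as [k [Hk Hky]]; [lra|].
      exists k. split; [|exact Hky].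
      apply in_in_remove; [intros ->; lra | exact Hk]. }
  pose proof (sum_list_remove (fun k => b k - a k) L K (fun k _ => Hlen k) HK).
  simpl in *. lra.
Qed.

Lemma closed_interval_compact (a b : nat -> R) (c t : R) :
  c <= t -> (forall y, c <= y <= t -> exists k, a k < y < b k) ->
  exists n, forall y, c <= y <= t -> exists k, (k <= n)%nat /\ a k < y < b k.
Proof.
  intros Hct Hcov.
  (* the right ends x of the initial segments [c, x] that are finitely covered *)
  set (A := fun x => c <= x <= t /\ exists n, forall y, c <= y <= x ->
              exists k, (k <= n)%nat /\ a k < y < b k).
  assert (HAc : A c).
  { split; [lra|]. destruct (Hcov c) as [K HK]; [lra|].
    exists K. intros y Hy. exists K. split; [lia|]. replace y with c by lra. exact HK. }
  destruct (completeness A (ex_intro _ t (fun x Hx => proj2 (proj1 Hx))) (ex_intro _ c HAc))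
    as [s [Hs_ub Hs_least]].
  assert (Hcs : c <= s) by (apply Hs_ub; exact HAc).
  assert (Hst : s <= t) by (apply Hs_least; intros x [Hx _]; lra).
  destruct (Hcov s) as [K [HaK HbK]]; [lra|].
  assert (Hx : exists x, A x /\ a K < x).
  { apply NNPP. intros Hnone. assert (s <= a K); [|lra].
    apply Hs_least. intros x Hx. apply Rnot_lt_le. intros Hlt. apply Hnone.
    exists x. split; [exact Hx | exact Hlt]. }
  destruct Hx as [x [[Hx_range [n Hn]] HaKx]].
  (* the interval of index K lets the covered segment reach past s, unless s = t *)
  set (x' := Rmin t ((s + b K) / 2)).
  assert (HAx' : A x').
  { unfold x'; split; [split; [apply Rmin_glb; lra | apply Rmin_l]|].
    exists (Nat.max n K). intros y Hy.
    destruct (Rle_dec y x) as [Hyx|Hyx].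
    - destruct (Hn y) as [k [Hk Hky]]; [lra|]. exists k. split; [lia | exact Hky].
    - exists K. split; [lia|]. pose proof (Rmin_r t ((s + b K) / 2)). lra. }
  assert (Hx's : x' <= s) by (apply Hs_ub; exact HAx').
  assert (Hx't : x' = t).
  { unfold x' in *. unfold Rmin in *. destruct Rle_dec; lra. }
  rewrite Hx't in HAx'. destruct HAx' as [_ Hfinite]. exact Hfinite.
Qed.

Lemma geometric_partial_sum (r : R) (n : nat) :
  sum_f_R0 (fun k => r / 2 ^ S k) n = r - r / 2 ^ S n.
Proof.
  induction n as [|n IH]; simpl; [field|].
  simpl in IH. rewrite IH. field. apply pow_nonzero. lra.
Qed.

Lemma interval_le_cover (a b : nat -> R) (c d eta : R) :
  (forall k, a k <= b k) -> (forall y, c <= y < d -> exists k, a k <= y < b k) -> 0 < eta ->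
  exists n, d - c <= partial_sum (fun k => b k - a k) n + eta.
Proof.
  intros hab Hcov Heta.
  destruct (Rle_dec d c) as [Hdc|Hcd].
  { exists 0%nat. unfold partial_sum. simpl. lra. }
  (* shrink [c, d) to a closed interval and enlarge [a k, b k) to open intervals,
     losing at most eta / 2 on each side *)
  set (theta := Rmin (eta / 2) ((d - c) / 2)).
  assert (Htheta : 0 < theta /\ theta <= eta / 2 /\ theta <= (d - c) / 2).
  { unfold theta. split; [apply Rmin_glb_lt; lra | split; [apply Rmin_l | apply Rmin_r]]. }
  set (slack := fun k => (eta / 2) / 2 ^ S k).
  assert (Hslack : forall k, 0 < slack k).
  { intros k. apply Rdiv_lt_0_compat; [lra | apply pow_lt; lra]. }
  set (a' := fun k => a k - slack k).
  assert (Hcov' : forall y, c <= y <= d - theta -> exists k, a' k < y < b k).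
  { intros y Hy. destruct (Hcov y) as [k Hk]; [lra|].
    exists k. unfold a'. specialize (Hslack k). lra. }
  destruct (closed_interval_compact a' b c (d - theta)) as [n Hn]; [lra | exact Hcov'|].
  exists (S n).
  assert (Hfin : d - theta - c <= sum_list (fun k => b k - a' k) (seq 0 (S n))).
  { apply closed_interval_finite_cover.
    - intros k. unfold a'. specialize (hab k). specialize (Hslack k). lra.
    - intros y Hy. destruct (Hn y Hy) as [k [Hk Hky]].
      exists k. split; [apply in_seq; lia | exact Hky]. }
  change (sum_list (fun k => b k - a' k) (seq 0 (S n))) with
    (partial_sum (fun k => b k - a' k) (S n)) in Hfin.
  unfold partial_sum in Hfin.
  rewrite (sum_list_ext _ (fun k => (b k - a k) + slack k)) in Hfin
    by (intros k _; unfold a'; ring).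
  rewrite sum_list_plus in Hfin.
  change (sum_list slack (seq 0 (S n))) with (partial_sum slack (S n)) in Hfin.
  rewrite partial_sum_sum_f_R0 in Hfin. unfold slack in Hfin.
  rewrite geometric_partial_sum in Hfin.
  assert (0 < (eta / 2) / 2 ^ S n) by apply Hslack.
  unfold partial_sum. lra.
Qed.

Lemma partial_sum_mono (w : nat -> R) (n m : nat) :
  (forall k, 0 <= w k) -> (n <= m)%nat -> partial_sum w n <= partial_sum w m.
Proof.
  intros Hw Hnm. apply sum_list_incl; [apply seq_NoDup | |intros k _; apply Hw].
  intros k Hk. apply in_seq in Hk. apply in_seq. lia.
Qed.

Lemma partial_sum_cut (a b : nat -> R) (m : R) (n : nat) :
  (forall k, a k <= b k) ->
  partial_sum (fun k => b k - a k) n =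
  partial_sum (fun k => Rmin (b k) m - Rmin (a k) m) n +
  partial_sum (fun k => Rmax (b k) m - Rmax (a k) m) n.
Proof.
  intros hab. unfold partial_sum. rewrite <- sum_list_plus.
  apply sum_list_ext. intros k _. specialize (hab k).
  unfold Rmin, Rmax; repeat destruct Rle_dec; lra.
Qed.

Lemma disjoint_intervals_le_cover (c d : nat -> R) (N : nat) :
  forall (a b : nat -> R) (eta : R), (forall k, a k <= b k) ->
  (forall i, (i < N)%nat -> c i <= d i) ->
  (forall i i', (i < i')%nat -> (i' < N)%nat -> d i <= c i') ->
  (forall i y, (i < N)%nat -> c i <= y < d i -> exists k, a k <= y < b k) ->
  0 < eta ->
  exists n, partial_sum (fun i => d i - c i) N <= partial_sum (fun k => b k - a k) n + eta.
Proof.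
  induction N as [|N IH]; intros a b eta hab Hcd Hsorted Hcov Heta.
  - exists 0%nat. unfold partial_sum. simpl. lra.
  - (* cut every covering interval at the left end m of the last interval: the parts
       left of m cover the first N intervals, the parts right of m cover the last one *)
    set (m := c N).
    assert (Hmin : forall k, Rmin (a k) m <= Rmin (b k) m)
      by (intros k; specialize (hab k); unfold Rmin; repeat destruct Rle_dec; lra).
    assert (Hmax : forall k, Rmax (a k) m <= Rmax (b k) m)
      by (intros k; specialize (hab k); unfold Rmax; repeat destruct Rle_dec; lra).
    destruct (IH (fun k => Rmin (a k) m) (fun k => Rmin (b k) m) (eta / 2)) as [n1 Hn1].
    + exact Hmin.
    + intros i Hi. apply Hcd. lia.
    + intros i i' Hii' Hi'. apply Hsorted; lia.
    + intros i y Hi Hy. destruct (Hcov i y) as [k Hk]; [lia | exact Hy|].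
      assert (d i <= m) by (apply Hsorted; lia).
      exists k. unfold Rmin; repeat destruct Rle_dec; lra.
    + lra.
    + destruct (interval_le_cover (fun k => Rmax (a k) m) (fun k => Rmax (b k) m)
                  (c N) (d N) (eta / 2)) as [n2 Hn2].
      * exact Hmax.
      * intros y Hy. destruct (Hcov N y) as [k Hk]; [lia | exact Hy|].
        exists k. unfold m, Rmax; repeat destruct Rle_dec; lra.
      * lra.
      * exists (Nat.max n1 n2). rewrite partial_sum_S, (partial_sum_cut a b m _ hab).
        assert (Hmax_len : forall k, 0 <= Rmax (b k) m - Rmax (a k) m)
          by (intros k; specialize (Hmax k); lra).
        assert (Hmin_len : forall k, 0 <= Rmin (b k) m - Rmin (a k) m)
          by (intros k; specialize (Hmin k); lra).
        pose proof (partial_sum_mono _ n1 (Nat.max n1 n2) Hmin_len (Nat.le_max_l _ _)).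
        pose proof (partial_sum_mono _ n2 (Nat.max n1 n2) Hmax_len (Nat.le_max_r _ _)).
        lra.
Qed.


Lemma partial_sum_le_limit (u : nat -> R) (t : R) (n : nat) :
  (forall k, 0 <= u k) -> Un_cv (sum_f_R0 u) t -> partial_sum u n <= t.
Proof.
  intros Hu Hcv.
  assert (Hgrow : Un_growing (sum_f_R0 u)) by (intros k; simpl; specialize (Hu (S k)); lra).
  destruct n as [|n].
  - pose proof (growing_ineq _ _ Hgrow Hcv 0). specialize (Hu 0%nat).
    unfold partial_sum. simpl in *. lra.
  - rewrite partial_sum_sum_f_R0. exact (growing_ineq _ _ Hgrow Hcv n).
Qed.

Lemma lebesgue_ge (E : R -> Prop) (s : R) :
  (exists t, cover_lengths E t) ->
  (forall a b, (forall k, a k <= b k) -> (forall x, E x -> exists k, a k <= x < b k) ->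
     forall eta, 0 < eta -> exists n, s <= partial_sum (fun k => b k - a k) n + eta) ->
  s <= lebesgue E.
Proof.
  intros [t0 Ht0] Hcovers.
  assert (Hbelow : forall t, cover_lengths E t -> s <= t).
  { intros t [a [b [hab [Hcov Hcv]]]]. apply Rle_plus_epsilon. intros eta Heta.
    destruct (Hcovers a b hab Hcov eta Heta) as [n Hn].
    assert (partial_sum (fun k => b k - a k) n <= t)
      by (apply partial_sum_le_limit; [intros k; specialize (hab k); lra | exact Hcv]).
    lra. }
  unfold lebesgue, lub_or_0. destruct excluded_middle_informative as [Hbd|Hno].
  - destruct completeness as [m [Hub Hleast]]. simpl.
    assert (m <= - s); [|lra].
    apply Hleast. intros t Ht. specialize (Hbelow _ Ht). lra.
  - exfalso. apply Hno. split.
    + exists (- s). intros t Ht. specialize (Hbelow _ Ht). lra.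
    + exists (- t0). rewrite Ropp_involutive. exact Ht0.
Qed.

Lemma bounded_set_cover (E : R -> Prop) (lo hi : R) :
  lo <= hi -> (forall x, E x -> lo <= x < hi) -> exists t, cover_lengths E t.
Proof.
  intros Hlo_hi HE. exists (hi - lo).
  exists (fun _ => lo), (fun k => match k with O => hi | S _ => lo end).
  split; [intros [|k]; lra|]. split.
  - intros x Hx. exists 0%nat. exact (HE x Hx).
  - intros eps Heps. exists 0%nat. intros n _.
    replace (sum_f_R0 _ n) with (hi - lo).
    + unfold Rdist. rewrite Rminus_diag, Rabs_R0. exact Heps.
    + induction n as [|n IH]; simpl in *; [reflexivity | rewrite <- IH; ring].
Qed.

Lemma lebesgue_ge_disjoint_intervals (E : R -> Prop) (c d : nat -> R) (N : nat) :
  (exists t, cover_lengths E t) ->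
  (forall i, (i < N)%nat -> c i <= d i) ->
  (forall i i', (i < i')%nat -> (i' < N)%nat -> d i <= c i') ->
  (forall i y, (i < N)%nat -> c i <= y < d i -> E y) ->
  partial_sum (fun i => d i - c i) N <= lebesgue E.
Proof.
  intros Hcover Hcd Hsorted Hsub. apply lebesgue_ge; [exact Hcover|].
  intros a b hab Hcov eta Heta.
  apply (disjoint_intervals_le_cover c d N a b eta hab Hcd Hsorted); [|exact Heta].
  intros i y Hi Hy. exact (Hcov y (Hsub i y Hi Hy)).
Qed.

Lemma lebesgue_nonneg (E : R -> Prop) : (exists t, cover_lengths E t) -> 0 <= lebesgue E.
Proof.
  intros Hcover.
  apply (lebesgue_ge_disjoint_intervals E (fun _ => 0) (fun _ => 0) 0 Hcover); intros; lia.
Qed.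

(** * Cumulative masses of an enumeration *)

Section Enumeration.
Context {T : Type} (P : T -> R) (I : nat -> Prop) (z : nat -> T).

Lemma delta_segment (m n : nat) :
  sum_list (fun i => P (z i)) (seq m n) = delta P z (m + n) - delta P z m.
Proof.
  revert m. induction n as [|n IH]; intros m; simpl.
  - rewrite Nat.add_0_r. ring.
  - rewrite IH, Nat.add_succ_r. simpl. ring.
Qed.

(** The intervals [delta k, delta (k+1)) are consecutive, so an increasing run of them
    passes every point between its ends. *)
Lemma delta_crossing (d : R) (N : nat) : delta P z 0 <= d < delta P z N ->
  exists k, (k < N)%nat /\ delta P z k <= d < delta P z (S k).
Proof.
  induction N as [|N IH]; intros Hd; [simpl in Hd; lra|].
  destruct (Rlt_dec d (delta P z N)) as [HdN|HNd].
  - destruct IH as [k [Hk Hkd]]; [lra|]. exists k. split; [lia | exact Hkd].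
  - exists N. split; [lia | lra].
Qed.

Hypothesis hP : is_pmf P.
Hypothesis hz : dec_enum P I z.

Lemma enum_down (k j : nat) : I k -> (j <= k)%nat -> I j.
Proof. destruct hz as [Hdown _]. intros Hk Hjk. induction Hjk; auto. Qed.

Lemma enum_pos (k : nat) : I k -> 0 < P (z k).
Proof. destruct hz as [_ [_ [Hpos _]]]. exact (Hpos k). Qed.

Lemma delta_mono (m n : nat) : (m <= n)%nat -> delta P z m <= delta P z n.
Proof.
  intros Hmn. induction Hmn as [|n _ IH]; [lra|]. simpl.
  pose proof (pmf_nonneg P (z n) hP). lra.
Qed.

Lemma delta_nonneg (k : nat) : 0 <= delta P z k.
Proof. exact (delta_mono 0 k (Nat.le_0_l k)). Qed.

Lemma enum_segment_NoDup (m n : nat) :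
  (forall i, (m <= i < m + n)%nat -> I i) -> NoDup (map z (seq m n)).
Proof.
  destruct hz as [_ [Hinj _]]. revert m. induction n as [|n IH]; intros m HI; simpl.
  - constructor.
  - constructor; [|apply IH; intros i Hi; apply HI; lia].
    intros Hin. apply in_map_iff in Hin. destruct Hin as [k [Hzk Hk]].
    apply in_seq in Hk. assert (k = m); [|lia].
    apply Hinj; [apply HI; lia | apply HI; lia | exact Hzk].
Qed.

Lemma delta_le_1 (N : nat) : (forall j, (j < N)%nat -> I j) -> delta P z N <= 1.
Proof.
  intros HN. pose proof (delta_segment 0 N) as Hseg. simpl in Hseg.
  rewrite <- sum_list_map in Hseg.
  pose proof (pmf_sum_le1 P _ hP (enum_segment_NoDup 0 N (fun i Hi => HN i (proj2 Hi)))).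
  lra.
Qed.

Lemma delta_succ_le_1 (k : nat) : I k -> delta P z (S k) <= 1.
Proof. intros Hk. apply delta_le_1. intros j Hj. apply (enum_down k); [exact Hk | lia]. Qed.

Lemma delta_lt_1 (k : nat) : I k -> delta P z k < 1.
Proof.
  intros Hk. pose proof (delta_succ_le_1 k Hk). pose proof (enum_pos k Hk). simpl in *. lra.
Qed.

Lemma delta_interval_exists (d : R) : 0 <= d < 1 ->
  exists k, I k /\ delta P z k <= d < delta P z (S k).
Proof.
  intros Hd. destruct hz as [_ [_ [_ [Hsurj _]]]].
  destruct (finite_sums_lub_approx P 1 (1 - d) (proj2 hP)) as [l [Hl Hmass]]; [lra|].
  destruct (sum_list_reindex_bound P z I (fun i => P (z i)) l) as [N [HN Hsum]].
  - exact enum_down.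
  - intros k Hk. exact (Rlt_le _ _ (enum_pos k Hk)).
  - exact Hl.
  - intros x _. destruct (Rle_dec (P x) 0) as [Hx|Hx]; [left; exact Hx|right].
    destruct (Hsurj x) as [k [Hk Hzk]]; [lra|].
    exists k. split; [exact Hk|]. split; [exact Hzk|]. rewrite Hzk. lra.
  - pose proof (delta_segment 0 N) as Hseg. simpl in Hseg.
    fold (partial_sum (fun i => P (z i)) N) in Hseg.
    destruct (delta_crossing d N) as [k [Hk Hkd]]; [simpl; lra|].
    exists k. split; [exact (HN k Hk) | exact Hkd].
Qed.

Lemma delta_interval_unique (k k' : nat) (d : R) :
  delta P z k <= d < delta P z (S k) -> delta P z k' <= d < delta P z (S k') -> k = k'.
Proof.
  intros Hk Hk'. destruct (Nat.lt_total k k') as [Hlt|[Heq|Hgt]]; [|exact Heq|].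
  - pose proof (delta_mono (S k) k' Hlt). lra.
  - pose proof (delta_mono (S k') k Hgt). lra.
Qed.

Lemma c_fun_unique (d v v' : R) : c_fun P I z d v -> c_fun P I z d v' -> v = v'.
Proof.
  intros [k [_ [Hk ->]]] [k' [_ [Hk' ->]]].
  rewrite (delta_interval_unique k k' d Hk Hk'). reflexivity.
Qed.

(** The index of the interval containing d (meaningful for 0 <= d < 1). *)
Definition interval_index (d : R) : nat :=
  epsilon (inhabits 0%nat) (fun k => I k /\ delta P z k <= d < delta P z (S k)).

Lemma interval_index_spec (d : R) : 0 <= d < 1 ->
  I (interval_index d) /\
  delta P z (interval_index d) <= d < delta P z (S (interval_index d)).
Proof.
  intros Hd. exact (epsilon_spec (inhabits 0%nat)
    (fun k => I k /\ delta P z k <= d < delta P z (S k)) (delta_interval_exists d Hd)).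
Qed.

End Enumeration.

(** * The quantile map *)

Lemma le_from_below (a b q : R) :
  0 <= q -> (forall u, a <= u < b -> u - a <= q) -> b - a <= q.
Proof.
  intros Hq Hu. apply Rnot_lt_le. intros Hlt.
  assert (a + (q + (b - a)) / 2 - a <= q) by (apply Hu; lra). lra.
Qed.

Lemma exp_le_compat (u v : R) : u <= v -> exp u <= exp v.
Proof. intros [Hlt| ->]; [left; exact (exp_increasing u v Hlt) | right; reflexivity]. Qed.

Section QuantileMap.
Context {X Y : Type} (PX : X -> R) (IX : nat -> Prop) (zX : nat -> X)
  (PY : Y -> R) (IY : nat -> Prop) (zY : nat -> Y).
Hypothesis hPX : is_pmf PX.
Hypothesis hPY : is_pmf PY.
Hypothesis hzX : dec_enum PX IX zX.
Hypothesis hzY : dec_enum PY IY zY.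
Variable gamma : R.

Local Notation dx := (delta PX zX).
Local Notation dy := (delta PY zY).
Local Notation EE := (E_set PX IX zX PY IY zY gamma).

(** x_k is sent to the y_j whose interval [dy j, dy (j+1)) contains dx k; elements of
    probability zero, which are not enumerated, are sent anywhere. *)
Definition quantile_map (x : X) : Y :=
  zY (interval_index PY IY zY (dx (epsilon (inhabits 0%nat) (fun k => IX k /\ zX k = x)))).

Local Notation Q := (pushforward PX quantile_map).

Lemma quantile_map_spec (k j : nat) :
  IX k -> IY j -> dy j <= dx k < dy (S j) -> quantile_map (zX k) = zY j.
Proof.
  intros Hk Hj Hkj. unfold quantile_map.
  set (k' := epsilon (inhabits 0%nat) (fun k' => IX k' /\ zX k' = zX k)).
  assert (Hk' : IX k' /\ zX k' = zX k)
    by exact (epsilon_spec (inhabits 0%nat) (fun k' => IX k' /\ zX k' = zX k)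
                (ex_intro _ k (conj Hk eq_refl))).
  destruct hzX as [_ [Hinj _]].
  replace k' with k by (symmetry; apply Hinj; tauto).
  destruct (interval_index_spec PY IY zY hPY hzY (dx k)) as [_ Hidx].
  { split; [exact (delta_nonneg PX zX hPX k)|].
    pose proof (delta_succ_le_1 PY IY zY hPY hzY j Hj). lra. }
  f_equal. exact (delta_interval_unique PY zY hPY _ _ _ Hidx Hkj).
Qed.

(** Every x-interval starting in [dx m, dy (j+1)), inside the interval of y_j, is sent
    to y_j; hence y_j receives at least the mass dy (j+1) - dx m. *)
Lemma pushforward_ge_run (j m : nat) :
  IY j -> dy j <= dx m < dy (S j) -> dy (S j) - dx m <= Q (zY j).
Proof.
  intros Hj Hm.
  apply le_from_below; [apply pushforward_nonneg|]. intros u Hu.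
  pose proof (delta_succ_le_1 PY IY zY hPY hzY j Hj).
  pose proof (delta_nonneg PX zX hPX m).
  destruct (delta_interval_exists PX IX zX hPX hzX u) as [k [Hk Hku]]; [lra|].
  assert (Hmk : (m <= k)%nat).
  { destruct (Nat.le_gt_cases m k) as [Hle|Hgt]; [exact Hle|].
    pose proof (delta_mono PX zX hPX (S k) m Hgt). lra. }
  assert (HI : forall i, (m <= i < m + (S k - m))%nat -> IX i)
    by (intros i Hi; apply (enum_down PX IX zX hzX k); [exact Hk | lia]).
  pose proof (pushforward_ge_fiber PX quantile_map hPX (zY j) _
                (enum_segment_NoDup PX IX zX hzX m (S k - m) HI)) as Hfiber.
  rewrite sum_list_map, delta_segment in Hfiber.
  replace (m + (S k - m))%nat with (S k) in Hfiber by lia.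
  assert (dx (S k) - dx m <= Q (zY j)); [|lra].
  apply Hfiber. intros x Hx. apply in_map_iff in Hx. destruct Hx as [i [<- Hi]].
  apply in_seq in Hi.
  apply quantile_map_spec; [apply HI; lia | exact Hj|].
  pose proof (delta_mono PX zX hPX m i ltac:(lia)).
  pose proof (delta_mono PX zX hPX i k ltac:(lia)). lra.
Qed.

(** The x-interval containing the left end dy j of the interval of y_j. *)
Definition straddle (j : nat) : nat := interval_index PX IX zX (dy j).

(** The length of the initial part of [dy j, dy (j+1)) covered by that x-interval:
    only this part can be missing from the mass that y_j receives. *)
Definition overlap (j : nat) : R := Rmin (dx (S (straddle j))) (dy (S j)) - dy j.

Lemma straddle_spec (j : nat) : IY j ->
  IX (straddle j) /\ dx (straddle j) <= dy j < dx (S (straddle j)).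
Proof.
  intros Hj. apply interval_index_spec; [exact hPX | exact hzX|].
  split; [exact (delta_nonneg PY zY hPY j) | exact (delta_lt_1 PY IY zY hPY hzY j Hj)].
Qed.

Lemma overlap_bounds (j : nat) : IY j -> 0 <= overlap j <= PY (zY j).
Proof.
  intros Hj. destruct (straddle_spec j Hj) as [_ Hk].
  pose proof (enum_pos PY IY zY hzY j Hj).
  pose proof (Rmin_r (dx (S (straddle j))) (dy (S j))).
  unfold overlap. simpl in *. unfold Rmin in *. destruct Rle_dec; lra.
Qed.

Lemma pushforward_deficit (j : nat) : IY j -> PY (zY j) - overlap j <= Q (zY j).
Proof.
  intros Hj. destruct (straddle_spec j Hj) as [_ Hk].
  pose proof (enum_pos PY IY zY hzY j Hj).
  pose proof (pushforward_nonneg PX quantile_map (zY j)).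
  unfold overlap. set (k := straddle j) in *.
  destruct (Rlt_dec (dx (S k)) (dy (S j))) as [Hend|Hend].
  - rewrite Rmin_left by lra.
    pose proof (pushforward_ge_run j (S k) Hj ltac:(lra)). simpl in *. lra.
  - rewrite Rmin_right by lra. simpl. lra.
Qed.

Lemma overlap_outside_E (j : nat) :
  IY j -> ~ EE (dy j) -> overlap j <= exp (- gamma) * PY (zY j).
Proof.
  intros Hj HE. destruct (straddle_spec j Hj) as [Hk Hkj].
  set (k := straddle j) in *.
  pose proof (enum_pos PY IY zY hzY j Hj). pose proof (enum_pos PX IX zX hzX k Hk).
  assert (Hgap : gamma <= ln (/ PX (zX k)) - ln (/ PY (zY j))).
  { apply Rnot_lt_le. intros Hlt. apply HE. split.
    - split; [exact (delta_nonneg PY zY hPY j) | exact (delta_lt_1 PY IY zY hPY hzY j Hj)].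
    - exists (ln (/ PX (zX k))), (ln (/ PY (zY j))). split; [|split; [|exact Hlt]].
      + exists k. split; [exact Hk | split; [exact Hkj | reflexivity]].
      + exists j. split; [exact Hj | split; [simpl; lra | reflexivity]]. }
  rewrite !ln_Rinv in Hgap by lra.
  assert (PX (zX k) <= exp (- gamma) * PY (zY j)).
  { rewrite <- (exp_ln (PX (zX k))), <- (exp_ln (PY (zY j))), <- exp_plus by lra.
    apply exp_le_compat. lra. }
  pose proof (Rmin_l (dx (S k)) (dy (S j))). unfold overlap. fold k. simpl in *. lra.
Qed.

(** Inside E(gamma), c^x and c^y are constant on the overlap, so it lies in E(gamma). *)
Lemma overlap_inside_E (j : nat) (y : R) :
  IY j -> EE (dy j) -> dy j <= y < dy j + overlap j -> EE y.
Proof.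
  intros Hj [_ [vx [vy [Hvx [Hvy Hlt]]]]] Hy.
  destruct (straddle_spec j Hj) as [Hk Hkj]. set (k := straddle j) in *.
  pose proof (Rmin_l (dx (S k)) (dy (S j))). pose proof (Rmin_r (dx (S k)) (dy (S j))).
  pose proof (delta_succ_le_1 PY IY zY hPY hzY j Hj).
  unfold overlap in Hy. fold k in Hy.
  assert (Hvx_eq : vx = ln (/ PX (zX k))).
  { apply (c_fun_unique PX IX zX hPX (dy j)); [exact Hvx|].
    exists k. split; [exact Hk | split; [exact Hkj | reflexivity]]. }
  assert (Hvy_eq : vy = ln (/ PY (zY j))).
  { apply (c_fun_unique PY IY zY hPY (dy j)); [exact Hvy|].
    exists j. split; [exact Hj | split; [|reflexivity]].
    pose proof (enum_pos PY IY zY hzY j Hj). simpl. lra. }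
  subst vx vy. split; [pose proof (delta_nonneg PY zY hPY j); lra|].
  exists (ln (/ PX (zX k))), (ln (/ PY (zY j))). split; [|split; [|exact Hlt]].
  - exists k. split; [exact Hk | split; [lra | reflexivity]].
  - exists j. split; [exact Hj | split; [lra | reflexivity]].
Qed.

Lemma E_has_cover : exists t, cover_lengths EE t.
Proof. apply (bounded_set_cover EE 0 1); [lra | intros x [Hx _]; exact Hx]. Qed.

Lemma overlap_sum (N : nat) :
  (forall j, (j < N)%nat -> IY j) -> partial_sum overlap N <= exp (- gamma) + lebesgue EE.
Proof.
  intros HN.
  set (inE := fun j => if excluded_middle_informative (EE (dy j)) then overlap j else 0).
  assert (Hsplit : partial_sum overlap N <=
                   exp (- gamma) * partial_sum (fun j => PY (zY j)) N + partial_sum inE N).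
  { unfold partial_sum. rewrite <- sum_list_scal, <- sum_list_plus.
    apply sum_list_le. intros j Hj. apply in_seq in Hj. specialize (HN j (proj2 Hj)).
    pose proof (overlap_outside_E j HN) as Hout. pose proof (overlap_bounds j HN).
    pose proof (exp_pos (- gamma)). pose proof (enum_pos PY IY zY hzY j HN).
    unfold inE. destruct excluded_middle_informative as [HE|HE]; [|specialize (Hout HE)];
      nra. }
  assert (Hmass : partial_sum (fun j => PY (zY j)) N <= 1).
  { pose proof (delta_segment PY zY 0 N) as Hseg. simpl in Hseg.
    pose proof (delta_le_1 PY IY zY hPY hzY N HN).
    unfold partial_sum. lra. }
  assert (Hmeasure : partial_sum inE N <= lebesgue EE).
  { replace (partial_sum inE N) with (partial_sum (fun j => (dy j + inE j) - dy j) N)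
      by (apply sum_list_ext; intros j _; ring).
    apply lebesgue_ge_disjoint_intervals; [exact E_has_cover | | |].
    - intros i Hi. pose proof (overlap_bounds i (HN i Hi)).
      unfold inE. destruct excluded_middle_informative; lra.
    - intros i i' Hii' Hi'. pose proof (overlap_bounds i (HN i ltac:(lia))).
      pose proof (delta_mono PY zY hPY (S i) i' Hii').
      unfold inE. simpl in *. destruct excluded_middle_informative; lra.
    - intros i y Hi Hy. unfold inE in Hy.
      destruct excluded_middle_informative as [HE|HE]; [|lra].
      exact (overlap_inside_E i y (HN i Hi) HE Hy). }
  pose proof (exp_pos (- gamma)).
  assert (exp (- gamma) * partial_sum (fun j => PY (zY j)) N <= exp (- gamma) * 1)
    by (apply Rmult_le_compat_l; lra).
  lra.
Qed.

Lemma quantile_excess (l : list Y) : NoDup l ->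
  sum_list (fun y => Rmax (PY y - Q y) 0) l <= exp (- gamma) + lebesgue EE.
Proof.
  intros Hl.
  destruct (sum_list_reindex_bound (fun y => Rmax (PY y - Q y) 0) zY IY overlap l)
    as [N [HN Hsum]].
  - exact (enum_down PY IY zY hzY).
  - intros j Hj. exact (proj1 (overlap_bounds j Hj)).
  - exact Hl.
  - intros y _. pose proof (pushforward_nonneg PX quantile_map y).
    destruct (Rle_dec (PY y) 0) as [Hy|Hy].
    + left. unfold Rmax. destruct Rle_dec; lra.
    + right. destruct hzY as [_ [_ [_ [Hsurj _]]]].
      destruct (Hsurj y) as [j [Hj <-]]; [lra|].
      exists j. split; [exact Hj | split; [reflexivity|]].
      pose proof (pushforward_deficit j Hj). pose proof (overlap_bounds j Hj).
      unfold Rmax. destruct Rle_dec; lra.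
  - pose proof (overlap_sum N HN). lra.
Qed.

Lemma quantile_map_distance :
  var_dist PY Q <= 2 * (exp (- gamma) + lebesgue EE).
Proof.
  apply var_dist_le_excess; [exact hPY | |exact quantile_excess].
  intros L HL. exact (pushforward_sum_le1 PX quantile_map hPX L HL).
Qed.

End QuantileMap.

Theorem proposition1 (X Y : Type) (HX : countable X) (HY : countable Y)
  (PX : X -> R) (PY : Y -> R) (hPX : is_pmf PX) (hPY : is_pmf PY)
  (IX : nat -> Prop) (zX : nat -> X) (hzX : dec_enum PX IX zX)
  (IY : nat -> Prop) (zY : nat -> Y) (hzY : dec_enum PY IY zY)
  (eps gamma : R) (heps : 0 < eps < 1) (hgamma : 0 < gamma)
  (hexp : exp (- gamma) <= eps) :
  exists phi : X -> Y,
    var_dist PY (pushforward PX phi)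
      <= 9 * eps + 10 * lebesgue (E_set PX IX zX PY IY zY gamma).
Proof.
  exists (quantile_map PX IX zX PY IY zY).
  pose proof (quantile_map_distance PX IX zX PY IY zY hPX hPY hzX hzY gamma) as Hdist.
  pose proof (lebesgue_nonneg _ (E_has_cover PX IX zX PY IY zY gamma)) as Hmu.
  lra.
Qed.
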